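(* Let $\tilde A\in\widetilde{SL}(2,\mathbb R)$, let $a\in\mathbb R$, let $b:=\tilde A(a)$, so that $I:=[a,b)$ is a fundamental domain of $\mathbb R/\langle\tilde A\rangle$, and let $W(I)$ denote the winding number of $(a,b)$. Then: (1) if $\tilde A$ is conjugate to $\tilde E_\alpha$ with $\alpha>0$, then $W(I)=n$ if and only if $\alpha=n\pi$, and otherwise $W(I)=n+\frac12$, where $n\pi<\alpha<(n+1)\pi$; (2) if $\tilde A$ is conjugate to $\tilde P^+_n$, respectively $\tilde P^-_n$, with $n\in\mathbb N^*$, then $n-\frac12\le W(I)\le n$, respectively $n\le W(I)\le n+\frac12$; (3) if $\tilde A$ is conjugate to $\tilde H_n(\lambda)$ with $\lambda>1$ and $n\in\mathbb N^*$, then $n-\frac12\le W(I)\le n+\frac12$. In cases (2) and (3), $W(I)$ is an integer if and only if $\pi(a)\in\mathbb{RP}^1$ is a fixed point of the projection $\hat A\in PSL(2,\mathbb R)$ of $\tilde A$. Moreover, the bounds in the inequalities above are attained (for suitable $a$).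
   Context: Let $\pi:\mathbb R\to\mathbb{RP}^1$, $\pi(t)=[\cos t:\sin t]$, $\bar\pi(t)=(\cos t,\sin t)\in S^1$; $SL(2,\mathbb R)$ acts on $S^1$ by $A\cdot v=Av/\|Av\|$ and $PSL(2,\mathbb R)$ on $\mathbb{RP}^1$ by homographies. $\widetilde{SL}(2,\mathbb R)$ is the group of diffeomorphisms $\tilde A$ of $\mathbb R$ with $\bar\pi\circ\tilde A=A\cdot\bar\pi$ for some $A\in SL(2,\mathbb R)$; its projection $\hat A\in PSL(2,\mathbb R)$ is the class of $A$, and $\pi\circ\tilde A=\hat A\circ\pi$. $\tilde E_\alpha(x)=x+\alpha$. For $\hat A\in PSL(2,\mathbb R)$ with a fixed point in $\mathbb{RP}^1$, its canonical lift $\tilde A_0$ is the unique lift having a fixed point in $\mathbb R$. With $P^\pm=\begin{pmatrix}1&\pm1\\0&1\end{pmatrix}$ and $H(\lambda)=\begin{pmatrix}\lambda&0\\0&\lambda^{-1}\end{pmatrix}$ ($\lambda>0$, $\lambda\ne1$), let $\tilde P^\pm_0$, $\tilde H_0(\lambda)$ be the canonical lifts of their classes and $\tilde P^\pm_n:=\tilde P^\pm_0\tilde E_{n\pi}$, $\tilde H_n(\lambda):=\tilde H_0(\lambda)\tilde E_{n\pi}$. Conjugacy is in $\widetilde{SL}(2,\mathbb R)$. Winding number: for $a<b$, $W((a,b))=k$ if $b=a+k\pi$, $k\in\mathbb N$, and $W((a,b))=k+\frac12$ if $a+k\pi<b<a+(k+1)\pi$, $k\in\mathbb N$. *)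

From Stdlib Require Import Reals Lra ClassicalEpsilon.
From Coquelicot Require Import Coquelicot.
Open Scope R_scope.

Record mat := Mat { m11 : R; m12 : R; m21 : R; m22 : R }.
Definition det (A : mat) : R := m11 A * m22 A - m12 A * m21 A.
Definition mopp (A : mat) : mat := Mat (- m11 A) (- m12 A) (- m21 A) (- m22 A).
Definition mapply (A : mat) (v : R * R) : R * R :=
  (m11 A * fst v + m12 A * snd v, m21 A * fst v + m22 A * snd v).
Definition vnorm (v : R * R) : R := sqrt (fst v ^ 2 + snd v ^ 2).

Definition actS1 (A : mat) (v : R * R) : R * R :=
  let w := mapply A v in (fst w / vnorm w, snd w / vnorm w).

Definition barpi (t : R) : R * R := (cos t, sin t).

Definition smooth (f : R -> R) : Prop := forall (n : nat) (x : R), ex_derive_n f n x.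
Definition diffeo (f : R -> R) : Prop :=
  exists g : R -> R, (forall x, g (f x) = x) /\ (forall x, f (g x) = x)
                     /\ smooth f /\ smooth g.

Definition lifts (A : mat) (f : R -> R) : Prop :=
  forall t, barpi (f t) = actS1 A (barpi t).

Definition tildeSL (f : R -> R) : Prop :=
  diffeo f /\ exists A : mat, det A = 1 /\ lifts A f.

(* f in \widetilde{SL} projects to the class \hat A of A in PSL(2,R) *)
Definition projects_to (A : mat) (f : R -> R) : Prop :=
  tildeSL f /\ (lifts A f \/ lifts (mopp A) f).

(* canonical lift of \hat A: the unique lift with a fixed point in R *)
Definition is_canonical_lift (A : mat) (f : R -> R) : Prop :=
  projects_to A f /\ exists x, f x = x.
Definition canonical_lift (A : mat) : R -> R :=
  epsilon (inhabits (fun x : R => x)) (is_canonical_lift A).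

Definition tE (alpha : R) : R -> R := fun x => x + alpha.
Definition Pplus : mat := Mat 1 1 0 1.
Definition Pminus : mat := Mat 1 (-1) 0 1.
Definition Hmat (lam : R) : mat := Mat lam 0 0 (/ lam).

Definition tPplus (n : nat) : R -> R :=
  fun x => canonical_lift Pplus (tE (INR n * PI) x).
Definition tPminus (n : nat) : R -> R :=
  fun x => canonical_lift Pminus (tE (INR n * PI) x).
Definition tH (lam : R) (n : nat) : R -> R :=
  fun x => canonical_lift (Hmat lam) (tE (INR n * PI) x).

Definition conjugate (F G : R -> R) : Prop :=
  exists g, tildeSL g /\ forall x, F (g x) = g (G x).

Definition winding_rel (a b w : R) : Prop :=
  (exists k : nat, b = a + INR k * PI /\ w = INR k) \/
  (exists k : nat, a + INR k * PI < b < a + (INR k + 1) * PI /\ w = INR k + / 2).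
Definition W (a b : R) : R := epsilon (inhabits 0) (winding_rel a b).

(* RP^1: projective equality of nonzero vectors; \pi(t) = [cos t : sin t] *)
Definition proj_eq (u v : R * R) : Prop :=
  exists l : R, l <> 0 /\ u = (l * fst v, l * snd v).
Definition fixed_by_proj (F : R -> R) (t : R) : Prop :=
  exists A : mat, det A = 1 /\ lifts A F /\ proj_eq (mapply A (barpi t)) (barpi t).

Definition is_integer (x : R) : Prop := exists k : Z, x = IZR k.

From Pilot Require Import Defs.
From Stdlib Require Import Reals Lra Lia ZArith ClassicalEpsilon.
From Coquelicot Require Import Coquelicot.
Open Scope R_scope.

(* Every g in the universal cover commutes with translation by PI and maps (t, t + PI) into
   (g t, g t + PI), so it preserves the winding class of intervals: W (g x) (g y) = W x y.
   For F = g o c o E_(n PI) o g^-1 the interval [g x, F (g x)) thus winds like [x, c x + n PI).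
   For the canonical lift c of an upper triangular A with positive definite symmetric part,
   c x - x lies in (-PI, PI) and has the sign of the cross product of barpi x and A barpi x,
   namely -sin^2 x, sin^2 x or (1/lam - lam) sin x cos x for P+, P- and H(lam); this gives
   W = n - 1/2, n or n + 1/2, the integer value occurring exactly when barpi x is an
   eigenvector.  Canonical lifts exist: t + atan (cross / dot) is an explicit smooth one. *)

(** * Smooth functions *)

Fixpoint Cn (n : nat) (f : R -> R) : Prop :=
  match n with
  | O => True
  | S m => exists f' : R -> R, (forall x, is_derive f x (f' x)) /\ Cn m f'
  end.

Lemma Cn_ext n : forall f g, (forall x, f x = g x) -> Cn n f -> Cn n g.
Proof.
induction n as [|n IH]; simpl; auto.
intros f g E [f' [Hf Hf']]. exists f'. split; auto.
intro x. apply is_derive_ext with f; auto.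
Qed.

Lemma Cn_S n : forall f, Cn (S n) f -> Cn n f.
Proof.
induction n as [|n IH]; simpl; auto.
intros f [f' [Hf Hf']]. exists f'. split; auto.
Qed.

Lemma Cn_const n : forall c, Cn n (fun _ => c).
Proof.
induction n as [|n IH]; simpl; auto.
intro c. exists (fun _ => 0). split; auto.
intro x. apply (is_derive_const c x).
Qed.

Lemma Cn_id n : Cn n (fun x => x).
Proof.
destruct n; simpl; auto.
exists (fun _ => 1). split; [intro x; apply (is_derive_id x) | apply Cn_const].
Qed.

Lemma Cn_plus n : forall f g, Cn n f -> Cn n g -> Cn n (fun x => f x + g x).
Proof.
induction n as [|n IH]; simpl; auto.
intros f g [f' [Hf Hf']] [g' [Hg Hg']].
exists (fun x => f' x + g' x). split; auto.
intro x. apply (is_derive_plus f g x (f' x) (g' x)); auto.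
Qed.

Lemma Cn_mult n : forall f g, Cn n f -> Cn n g -> Cn n (fun x => f x * g x).
Proof.
induction n as [|n IH]; simpl; auto.
intros f g Hf Hg.
pose proof (Cn_S n f Hf) as Hf0. pose proof (Cn_S n g Hg) as Hg0.
destruct Hf as [f' [Hf Hf']], Hg as [g' [Hg Hg']].
exists (fun x => f' x * g x + f x * g' x). split.
- intro x. apply (is_derive_mult f g x (f' x) (g' x)); auto. intros; apply Rmult_comm.
- apply Cn_plus; apply IH; auto.
Qed.

Lemma Cn_minus n f g : Cn n f -> Cn n g -> Cn n (fun x => f x - g x).
Proof.
intros Hf Hg. apply Cn_ext with (fun x => f x + (-1) * g x); [intro; ring|].
apply Cn_plus; auto. apply Cn_mult; auto. apply Cn_const.
Qed.

Lemma Cn_inv n : forall g, (forall x, g x <> 0) -> Cn n g -> Cn n (fun x => / g x).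
Proof.
induction n as [|n IH]; simpl; auto.
intros g Hnz Hg. pose proof (Cn_S n g Hg) as Hg0.
destruct Hg as [g' [Hg Hg']].
exists (fun x => -1 * g' x * (/ g x * / g x)). split.
- intro x. replace (-1 * g' x * (/ g x * / g x)) with (- g' x / g x ^ 2)
    by (field; apply Hnz).
  apply is_derive_inv; auto.
- apply Cn_mult; [apply Cn_mult; [apply Cn_const | auto] | apply Cn_mult; apply IH; auto].
Qed.

Lemma Cn_comp n : forall f g, Cn n f -> Cn n g -> Cn n (fun x => g (f x)).
Proof.
induction n as [|n IH]; simpl; auto.
intros f g Hf Hg.
pose proof (Cn_S n f Hf) as Hf0. pose proof (Cn_S n g Hg) as Hg0.
destruct Hf as [f' [Hf Hf']], Hg as [g' [Hg Hg']].
exists (fun x => g' (f x) * f' x). split.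
- intro x. rewrite Rmult_comm. apply (is_derive_comp g f x (g' (f x)) (f' x)); auto.
- apply Cn_mult; auto.
Qed.

Lemma Cn_sin_cos n : Cn n sin /\ Cn n cos.
Proof.
induction n as [|n [IHs IHc]]; simpl; auto.
split.
- exists cos. split; auto. intro x. apply is_derive_Reals, derivable_pt_lim_sin.
- exists (fun x => -1 * sin x). split.
  + intro x. apply is_derive_Reals. replace (-1 * sin x) with (- sin x) by ring.
    apply derivable_pt_lim_cos.
  + apply Cn_mult; auto. apply Cn_const.
Qed.

Lemma Cn_atan n : Cn n atan.
Proof.
destruct n; simpl; auto.
exists (fun x => / (1 + x * x)). split.
- intro x. apply is_derive_Reals. replace (x * x) with (x ^ 2) by ring.
  apply derivable_pt_lim_atan.
- apply Cn_inv; [intro x; nra|].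
  apply Cn_plus; [apply Cn_const | apply Cn_mult; apply Cn_id].
Qed.

Lemma Derive_n_S_is_derive f f' : (forall x, is_derive f x (f' x)) ->
  forall m x, Derive_n f (S m) x = Derive_n f' m x.
Proof.
intros Hf m. induction m as [|m IH]; intro x.
- apply is_derive_unique, Hf.
- apply Derive_ext, IH.
Qed.

Lemma Cn_ex_derive_n n : forall f, Cn n f -> forall x, ex_derive_n f n x.
Proof.
induction n as [|n IH]; simpl; auto.
intros f [f' [Hf Hf']] x. destruct n as [|n].
- exists (f' x). apply Hf.
- apply ex_derive_ext with (Derive_n f' n).
  + intro t. symmetry. apply Derive_n_S_is_derive, Hf.
  + apply (IH f' Hf' x).
Qed.

Lemma smooth_Cn f : (forall n, Cn n f) -> smooth f.
Proof. intros H n x. apply (Cn_ex_derive_n n), H. Qed.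

Ltac solve_Cn := repeat match goal with
 | |- Cn _ (fun x => _ + _) => apply Cn_plus
 | |- Cn _ (fun x => _ - _) => apply Cn_minus
 | |- Cn _ (fun x => _ * _) => apply Cn_mult
 | |- Cn ?n sin => exact (proj1 (Cn_sin_cos n))
 | |- Cn ?n cos => exact (proj2 (Cn_sin_cos n))
 | |- Cn _ (fun x => x) => apply Cn_id
 | |- Cn _ (fun _ => ?c) => apply Cn_const
 end.

(** * An explicit lift *)

Definition dot_act (A : mat) (t : R) : R :=
  cos t * fst (mapply A (barpi t)) + sin t * snd (mapply A (barpi t)).
Definition cross_act (A : mat) (t : R) : R :=
  cos t * snd (mapply A (barpi t)) - sin t * fst (mapply A (barpi t)).

Definition positive_definite (A : mat) : Prop := forall t, 0 < dot_act A t.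

Lemma sin2_cos2_pow t : sin t ^ 2 + cos t ^ 2 = 1.
Proof. pose proof (sin2_cos2 t) as H. unfold Rsqr in H. lra. Qed.

Lemma mapply_barpi A t : mapply A (barpi t) =
  (cos t * dot_act A t - sin t * cross_act A t, sin t * dot_act A t + cos t * cross_act A t).
Proof.
pose proof (sin2_cos2_pow t) as Hcs.
unfold dot_act, cross_act. destruct (mapply A (barpi t)) as [w1 w2]; cbn [fst snd].
f_equal.
- transitivity (w1 * (sin t ^ 2 + cos t ^ 2)); [rewrite Hcs|]; ring.
- transitivity (w2 * (sin t ^ 2 + cos t ^ 2)); [rewrite Hcs|]; ring.
Qed.

Lemma vnorm_mapply_barpi A t :
  vnorm (mapply A (barpi t)) = sqrt (dot_act A t ^ 2 + cross_act A t ^ 2).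
Proof.
pose proof (sin2_cos2_pow t) as Hcs.
rewrite mapply_barpi. unfold vnorm; cbn [fst snd]. f_equal.
transitivity ((dot_act A t ^ 2 + cross_act A t ^ 2) * (sin t ^ 2 + cos t ^ 2));
  [ring | rewrite Hcs; ring].
Qed.

Lemma vnorm_pos v : v <> (0, 0) -> 0 < vnorm v.
Proof.
destruct v as [p q]. intro H. unfold vnorm; cbn [fst snd]. apply sqrt_lt_R0.
destruct (Req_dec p 0), (Req_dec q 0); subst; try congruence; nra.
Qed.

Lemma vnorm_barpi t : vnorm (barpi t) = 1.
Proof.
unfold vnorm, barpi; cbn [fst snd]. rewrite <- sqrt_1. f_equal.
pose proof (sin2_cos2_pow t). lra.
Qed.

Definition adj (A : mat) : mat := Mat (m22 A) (- m12 A) (- m21 A) (m11 A).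

Lemma mapply_adj_l A v : det A = 1 -> mapply (adj A) (mapply A v) = v.
Proof.
intro Hd. destruct v as [x y]. unfold mapply, adj, det in *; cbn.
f_equal; [transitivity (x * (m11 A * m22 A - m12 A * m21 A))
         | transitivity (y * (m11 A * m22 A - m12 A * m21 A))];
  try (rewrite Hd; ring); ring.
Qed.

Lemma mapply_adj_r A v : det A = 1 -> mapply A (mapply (adj A) v) = v.
Proof.
intro Hd. destruct v as [x y]. unfold mapply, adj, det in *; cbn.
f_equal; [transitivity (x * (m11 A * m22 A - m12 A * m21 A))
         | transitivity (y * (m11 A * m22 A - m12 A * m21 A))];
  try (rewrite Hd; ring); ring.
Qed.

Lemma mapply_0 A : mapply A (0, 0) = (0, 0).
Proof. unfold mapply; cbn. f_equal; ring. Qed.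

Lemma vnorm_mapply_pos A B v : (forall u, mapply A (mapply B u) = u) -> v <> (0, 0) ->
  0 < vnorm (mapply B v).
Proof.
intros HAB Hv. apply vnorm_pos. intro H0. apply Hv.
rewrite <- (HAB v), H0. apply mapply_0.
Qed.

Lemma barpi_neq_0 t : barpi t <> (0, 0).
Proof. intro H. pose proof (vnorm_barpi t) as E. rewrite H in E. unfold vnorm in E.
cbn in E. rewrite Rmult_0_l, Rplus_0_r, sqrt_0 in E. lra. Qed.

Lemma vnorm_act_pos A t : det A = 1 -> 0 < vnorm (mapply A (barpi t)).
Proof.
intro Hd. apply (vnorm_mapply_pos (adj A)); [intro; apply mapply_adj_l, Hd | apply barpi_neq_0].
Qed.

Lemma actS1_comp A B v : (forall u, mapply A (mapply B u) = u) -> vnorm v = 1 ->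
  actS1 A (actS1 B v) = v.
Proof.
intros HAB Hv.
assert (Hv0 : v <> (0, 0)).
{ intro E. rewrite E in Hv. unfold vnorm in Hv; cbn in Hv.
  rewrite Rmult_0_l, Rplus_0_r, sqrt_0 in Hv. lra. }
pose proof (vnorm_mapply_pos A B v HAB Hv0) as Hr.
pose proof (HAB v) as Ev.
unfold actS1 at 2. destruct (mapply B v) as [p q]. cbn [fst snd] in *.
set (r := vnorm (p, q)) in *.
assert (E : mapply A (p / r, q / r) = (fst v / r, snd v / r)).
{ rewrite <- Ev. unfold mapply; cbn. f_equal; field; lra. }
unfold actS1. rewrite E. destruct v as [v1 v2]; cbn [fst snd] in *.
assert (En : vnorm (v1 / r, v2 / r) = / r).
{ unfold vnorm in *; cbn [fst snd] in *.
  replace ((v1 / r) ^ 2 + (v2 / r) ^ 2) with ((v1 ^ 2 + v2 ^ 2) * (/ r) ^ 2) by (field; lra).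
  rewrite sqrt_mult, Hv, sqrt_pow2; try nra.
  left; apply Rinv_0_lt_compat; lra. }
rewrite En. f_equal; field; lra.
Qed.

(* For positive definite A the angle from barpi t to A (barpi t) lies in (-PI/2, PI/2),
   so it is the arctangent of the ratio of cross and dot products. *)
Definition angle_lift (A : mat) (t : R) : R := t + atan (cross_act A t / dot_act A t).

Lemma cos_sin_atan_ratio N D : 0 < D ->
  cos (atan (N / D)) = D / sqrt (D ^ 2 + N ^ 2) /\
  sin (atan (N / D)) = N / sqrt (D ^ 2 + N ^ 2).
Proof.
intro HD.
assert (E : sqrt (1 + (N / D)²) = sqrt (D ^ 2 + N ^ 2) / D).
{ apply sqrt_lem_1.
  - pose proof (Rle_0_sqr (N / D)); lra.
  - apply Rmult_le_pos; [apply sqrt_pos | left; apply Rinv_0_lt_compat, HD].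
  - replace (sqrt (D ^ 2 + N ^ 2) / D * (sqrt (D ^ 2 + N ^ 2) / D))
      with (sqrt (D ^ 2 + N ^ 2) * sqrt (D ^ 2 + N ^ 2) / (D * D)) by (field; lra).
    rewrite sqrt_sqrt by nra. unfold Rsqr. field. lra. }
assert (Hs : 0 < sqrt (D ^ 2 + N ^ 2)) by (apply sqrt_lt_R0; nra).
rewrite cos_atan, sin_atan, E. split; field; lra.
Qed.

Lemma lifts_angle_lift A : positive_definite A -> lifts A (angle_lift A).
Proof.
intros HA t. pose proof (HA t) as HD.
destruct (cos_sin_atan_ratio (cross_act A t) (dot_act A t) HD) as [Ec Es].
assert (Hs : 0 < sqrt (dot_act A t ^ 2 + cross_act A t ^ 2)) by (apply sqrt_lt_R0; nra).
unfold actS1. rewrite vnorm_mapply_barpi, mapply_barpi.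
unfold angle_lift, barpi; cbn [fst snd].
rewrite cos_plus, sin_plus, Ec, Es. f_equal; field; lra.
Qed.

Lemma smooth_angle_lift A : positive_definite A -> smooth (angle_lift A).
Proof.
intro HA. apply smooth_Cn. intro n. unfold angle_lift.
apply Cn_plus; [apply Cn_id|].
apply (Cn_comp n (fun t => cross_act A t / dot_act A t) atan); [|apply Cn_atan].
unfold Rdiv. apply Cn_mult.
- unfold cross_act, mapply, barpi; cbn [fst snd]. solve_Cn.
- apply Cn_inv; [intro t; apply Rgt_not_eq, HA|].
  unfold dot_act, mapply, barpi; cbn [fst snd]. solve_Cn.
Qed.

Lemma barpi_inj_small u v : barpi u = barpi v -> - PI < u - v < PI -> u = v.
Proof.
intros E Huv. unfold barpi in E. injection E as Ec Es.
assert (H0 : sin (u - v) = 0) by (rewrite sin_minus, Ec, Es; ring).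
destruct (sin_eq_0_0 _ H0) as [k Hk]. pose proof PI_RGT_0.
assert (IZR k < 1 /\ -1 < IZR k) as [H1 H2] by (split; nra).
apply lt_IZR in H1. apply lt_IZR in H2. assert (k = 0%Z) by lia. subst. lra.
Qed.

Lemma angle_lift_comp A B : positive_definite A -> positive_definite B ->
  (forall u, mapply A (mapply B u) = u) -> forall x, angle_lift A (angle_lift B x) = x.
Proof.
intros HA HB HAB x. apply barpi_inj_small.
- rewrite lifts_angle_lift, lifts_angle_lift, actS1_comp; auto. apply vnorm_barpi.
- set (y := angle_lift B x).
  pose proof (atan_bound (cross_act A y / dot_act A y)).
  pose proof (atan_bound (cross_act B x / dot_act B x)).
  change (angle_lift A y) with (y + atan (cross_act A y / dot_act A y)).
  assert (y = x + atan (cross_act B x / dot_act B x)) by reflexivity. lra.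
Qed.

Lemma positive_definite_adj A : positive_definite A -> positive_definite (adj A).
Proof.
intros HA t. pose proof (HA (t + PI / 2)) as H.
unfold dot_act, mapply, barpi, adj in *; cbn [fst snd m11 m12 m21 m22] in *.
rewrite cos_plus, sin_plus, cos_PI2, sin_PI2 in H. lra.
Qed.

Lemma diffeo_angle_lift A : det A = 1 -> positive_definite A -> diffeo (angle_lift A).
Proof.
intros Hd HA. pose proof (positive_definite_adj A HA) as HA'.
exists (angle_lift (adj A)). repeat split.
- apply angle_lift_comp; auto. intro; apply mapply_adj_l, Hd.
- apply angle_lift_comp; auto. intro; apply mapply_adj_r, Hd.
- apply smooth_angle_lift, HA.
- apply smooth_angle_lift, HA'.
Qed.

(** * Elements of the universal cover *)

Lemma lift_sin_cos A c y : lifts A c ->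
  sin (c y - y) = cross_act A y / vnorm (mapply A (barpi y)) /\
  cos (c y - y) = dot_act A y / vnorm (mapply A (barpi y)).
Proof.
intro Hl. pose proof (Hl y) as E. unfold actS1, barpi in E. injection E as Ec Es.
unfold cross_act, dot_act, barpi.
set (r := vnorm (mapply A (cos y, sin y))) in *.
rewrite sin_minus, cos_minus, Ec, Es. unfold mapply; cbn [fst snd]. split; unfold Rdiv; ring.
Qed.

Lemma lift_sin_sub A g s t : det A = 1 -> lifts A g ->
  exists K, 0 < K /\ sin (g s - g t) = K * sin (s - t).
Proof.
intros Hd Hl. pose proof (Hl s) as Es. pose proof (Hl t) as Et.
pose proof (vnorm_act_pos A s Hd) as Rs. pose proof (vnorm_act_pos A t Hd) as Rt.
unfold actS1 in Es, Et. unfold barpi in *.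
set (rs := vnorm (mapply A (cos s, sin s))) in *.
set (rt := vnorm (mapply A (cos t, sin t))) in *.
unfold mapply in Es, Et. cbn [fst snd] in Es, Et.
injection Es as Es1 Es2. injection Et as Et1 Et2.
exists (/ (rs * rt)). split; [apply Rinv_0_lt_compat; nra|].
rewrite sin_minus, Es1, Es2, Et1, Et2, (sin_minus s t).
unfold det in Hd.
transitivity (/ (rs * rt) * (sin s * cos t - cos s * sin t) * (m11 A * m22 A - m12 A * m21 A)).
- field. lra.
- rewrite Hd. ring.
Qed.

Lemma tildeSL_continuous g : tildeSL g -> continuity g.
Proof.
intros [[h [_ [_ [Hs _]]]] _] x. apply continuity_pt_filterlim.
apply (ex_derive_continuous g), (Hs 1%nat x).
Qed.

Lemma tildeSL_surjective g a : tildeSL g -> exists x, g x = a.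
Proof. intros [[h [_ [Hgh _]]] _]. exists (h a). apply Hgh. Qed.

Lemma IVT_between f x y c : continuity f -> x <= y ->
  (f x <= c <= f y \/ f y <= c <= f x) -> exists z, x <= z <= y /\ f z = c.
Proof.
intros Hc Hxy Hv.
destruct (IVT_cor (fun t => f t - c) x y) as [z [Hz Ez]].
- apply continuity_minus; [exact Hc | apply continuity_const; intros ? ?; reflexivity].
- exact Hxy.
- destruct Hv; nra.
- exists z. split; [exact Hz | lra].
Qed.

Lemma sin_pos_range h t u : continuity h -> h t = 0 ->
  (forall s, t < s < u -> 0 < sin (h s)) -> forall s, t < s < u -> 0 < h s < PI.
Proof.
intros Hc H0 Hsin s Hs. pose proof PI_RGT_0.
assert (Hreach : forall c, sin c = 0 -> c <> 0 -> (0 <= c <= h s \/ h s <= c <= 0) -> False).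
{ intros c Hc0 Hcn Hb.
  destruct (IVT_between h t s c Hc ltac:(lra) ltac:(rewrite H0; exact Hb)) as [z [Hz Ez]].
  assert (z <> t) by (intro; subst; congruence).
  pose proof (Hsin z ltac:(lra)) as Hz'. rewrite Ez, Hc0 in Hz'. lra. }
assert (Hlo : - PI < h s).
{ apply Rnot_le_lt. intro. apply (Hreach (- PI)); [rewrite sin_neg, sin_PI; ring | lra | right; lra]. }
assert (Hhi : h s < PI).
{ apply Rnot_le_lt. intro. apply (Hreach PI); [apply sin_PI | lra | left; lra]. }
split; [|exact Hhi].
apply Rnot_le_lt. intro Hneg. pose proof (Hsin s Hs) as Hp.
destruct (Req_dec (h s) 0) as [E|E].
- rewrite E, sin_0 in Hp. lra.
- pose proof (sin_lt_0_var (h s) Hlo ltac:(lra)). lra.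
Qed.

Lemma tildeSL_half_turn g t s : tildeSL g -> t < s < t + PI -> g t < g s < g t + PI.
Proof.
intros Hg Hs. pose proof (tildeSL_continuous g Hg) as Hc.
destruct Hg as [_ [A [Hd Hl]]].
assert (Hsin : forall s, t < s < t + PI -> 0 < sin (g s - g t)).
{ intros s' Hs'. destruct (lift_sin_sub A g s' t Hd Hl) as [K [HK ->]].
  apply Rmult_lt_0_compat; [exact HK | apply sin_gt_0; lra]. }
assert (Hc' : continuity (fun s => g s - g t)).
{ apply continuity_minus; [exact Hc | apply continuity_const; intros ? ?; reflexivity]. }
pose proof (sin_pos_range (fun s => g s - g t) t (t + PI) Hc' ltac:(cbv beta; ring) Hsin s Hs).
lra.
Qed.

Lemma tildeSL_add_PI g t : tildeSL g -> g (t + PI) = g t + PI.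
Proof.
intro Hg. pose proof PI_RGT_0.
pose proof (tildeSL_half_turn g t (t + PI / 2) Hg ltac:(lra)) as H1.
pose proof (tildeSL_half_turn g (t + PI / 2) (t + PI) Hg ltac:(lra)) as H2.
destruct Hg as [_ [A [Hd Hl]]].
destruct (lift_sin_sub A g (t + PI) t Hd Hl) as [K [_ E]].
replace (t + PI - t) with PI in E by ring. rewrite sin_PI, Rmult_0_r in E.
destruct (sin_eq_0_0 _ E) as [k Ek].
assert (IZR k < 2 /\ 0 < IZR k) as [Hk2 Hk0] by (split; nra).
apply lt_IZR in Hk2. apply lt_IZR in Hk0. assert (k = 1%Z) by lia. subst k. lra.
Qed.

Lemma tildeSL_add_nat_PI g (k : nat) t : tildeSL g -> g (t + INR k * PI) = g t + INR k * PI.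
Proof.
intro Hg. induction k as [|k IH].
- simpl. rewrite Rmult_0_l, !Rplus_0_r. reflexivity.
- rewrite S_INR. replace (t + (INR k + 1) * PI) with (t + INR k * PI + PI) by ring.
  rewrite tildeSL_add_PI, IH by exact Hg. ring.
Qed.

Lemma tildeSL_add_Z_PI g (k : Z) t : tildeSL g -> g (t + IZR k * PI) = g t + IZR k * PI.
Proof.
intro Hg. destruct (Z_le_gt_dec 0 k) as [Hk|Hk].
- rewrite <- (Z2Nat.id k Hk), <- INR_IZR_INZ. apply tildeSL_add_nat_PI, Hg.
- assert (E : IZR k = - INR (Z.to_nat (- k))).
  { rewrite INR_IZR_INZ, Z2Nat.id by lia. rewrite opp_IZR. ring. }
  rewrite E. pose proof (tildeSL_add_nat_PI g (Z.to_nat (- k)) (t + - INR (Z.to_nat (- k)) * PI) Hg) as H.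
  replace (t + - INR (Z.to_nat (- k)) * PI + INR (Z.to_nat (- k)) * PI) with t in H by ring.
  lra.
Qed.

Lemma tildeSL_sub_eq g x y (k : nat) : tildeSL g ->
  y - x = INR k * PI -> g y - g x = INR k * PI.
Proof.
intros Hg H. replace y with (x + INR k * PI) by lra.
rewrite tildeSL_add_nat_PI by exact Hg. ring.
Qed.

Lemma tildeSL_sub_between g x y (k : nat) : tildeSL g ->
  INR k * PI < y - x < (INR k + 1) * PI -> INR k * PI < g y - g x < (INR k + 1) * PI.
Proof.
intros Hg H.
pose proof (tildeSL_half_turn g (x + INR k * PI) y Hg ltac:(lra)) as H1.
rewrite tildeSL_add_nat_PI in H1 by exact Hg. lra.
Qed.

(** * Winding numbers *)

Lemma IZR_not_between (m : Z) (k : nat) : ~ (INR k < IZR m < INR k + 1).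
Proof.
rewrite INR_IZR_INZ. intros [H1 H2].
apply lt_IZR in H1. rewrite <- plus_IZR in H2. apply lt_IZR in H2. lia.
Qed.

Lemma INR_plus_half_not_integer (k : nat) : ~ is_integer (INR k + / 2).
Proof. intros [m Hm]. apply (IZR_not_between m k). lra. Qed.

Lemma sin_neq_0_between z (k : nat) : INR k * PI < z < (INR k + 1) * PI -> sin z <> 0.
Proof.
intros Hz H0. destruct (sin_eq_0_0 z H0) as [m ->]. pose proof PI_RGT_0.
apply (IZR_not_between m k). split; nra.
Qed.

Lemma PI_floor_unique z (j k : nat) : INR j * PI <= z < (INR j + 1) * PI ->
  INR k * PI <= z < (INR k + 1) * PI -> j = k.
Proof.
intros [H1 H2] [H3 H4]. pose proof PI_RGT_0.
assert (Ha : INR j < INR k + 1) by nra. assert (Hb : INR k < INR j + 1) by nra.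
rewrite <- S_INR in Ha, Hb. apply INR_lt in Ha. apply INR_lt in Hb. lia.
Qed.

Lemma PI_floor_pos d : 0 < d ->
  exists k : nat, d = INR k * PI \/ INR k * PI < d < (INR k + 1) * PI.
Proof.
intro Hd. pose proof PI_RGT_0. pose proof (archimed (d / PI)) as [Hup Hup'].
assert (Hk : (0 <= up (d / PI) - 1)%Z).
{ assert (0 < d / PI) by (apply Rdiv_lt_0_compat; lra).
  assert (0 < up (d / PI))%Z by (apply lt_IZR; lra). lia. }
exists (Z.to_nat (up (d / PI) - 1)). rewrite INR_IZR_INZ, Z2Nat.id, minus_IZR by exact Hk.
change (IZR 1) with 1. assert (Ed : d = d / PI * PI) by (field; lra).
assert (IZR (up (d / PI)) - 1 <= d / PI < IZR (up (d / PI))) as [Hl Hr] by lra.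
destruct (Rle_lt_or_eq_dec _ _ Hl) as [Hlt|Heq].
- right. split; nra.
- left. rewrite Heq. field. lra.
Qed.

Lemma winding_rel_functional a b w1 w2 :
  winding_rel a b w1 -> winding_rel a b w2 -> w1 = w2.
Proof.
pose proof PI_RGT_0.
intros [[j [Ej ->]]|[j [Ej ->]]] [[k [Ek ->]]|[k [Ek ->]]];
  assert (j = k) by (apply (PI_floor_unique (b - a)); split; nra); subst k; nra.
Qed.

Lemma W_spec a b w : winding_rel a b w -> W a b = w.
Proof.
intro Hw. apply (winding_rel_functional a b); [|exact Hw].
unfold W. apply epsilon_spec. exists w. exact Hw.
Qed.

Lemma W_eq_nat a b (k : nat) : b - a = INR k * PI -> W a b = INR k.
Proof. intro H. apply W_spec. left. exists k. split; [lra | reflexivity]. Qed.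

Lemma W_eq_half a b (k : nat) :
  INR k * PI < b - a < (INR k + 1) * PI -> W a b = INR k + / 2.
Proof. intro H. apply W_spec. right. exists k. split; [lra | reflexivity]. Qed.

Lemma W_integer_iff_sin a b : a < b -> (is_integer (W a b) <-> sin (b - a) = 0).
Proof.
intro Hab. destruct (PI_floor_pos (b - a) ltac:(lra)) as [k [E|E]].
- rewrite (W_eq_nat a b k E), E. split; intros _.
  + apply sin_eq_0_1. exists (Z.of_nat k). rewrite INR_IZR_INZ. reflexivity.
  + exists (Z.of_nat k). apply INR_IZR_INZ.
- rewrite (W_eq_half a b k E). split; intro H; exfalso.
  + exact (INR_plus_half_not_integer k H).
  + exact (sin_neq_0_between (b - a) k E H).
Qed.

Lemma tildeSL_increasing g x y : tildeSL g -> x < y -> g x < g y.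
Proof.
intros Hg Hxy. pose proof PI_RGT_0.
destruct (PI_floor_pos (y - x) ltac:(lra)) as [k [E|E]].
- pose proof (tildeSL_sub_eq g x y k Hg E). pose proof (pos_INR k). nra.
- pose proof (tildeSL_sub_between g x y k Hg E). pose proof (pos_INR k). nra.
Qed.

Lemma W_tildeSL g x y : tildeSL g -> x < y -> W (g x) (g y) = W x y.
Proof.
intros Hg Hxy. destruct (PI_floor_pos (y - x) ltac:(lra)) as [k [E|E]].
- rewrite (W_eq_nat x y k E). apply W_eq_nat, tildeSL_sub_eq; assumption.
- rewrite (W_eq_half x y k E). apply W_eq_half, tildeSL_sub_between; assumption.
Qed.

Lemma cross_act_eq_0_iff_proj_eq A t : det A = 1 ->
  (cross_act A t = 0 <-> proj_eq (mapply A (barpi t)) (barpi t)).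
Proof.
intro Hd. split.
- intro Hc. exists (dot_act A t). split.
  + intro H0. pose proof (vnorm_act_pos A t Hd) as Hr.
    rewrite mapply_barpi, Hc, H0 in Hr. unfold vnorm in Hr; cbn [fst snd] in Hr.
    replace ((cos t * 0 - sin t * 0) ^ 2 + (sin t * 0 + cos t * 0) ^ 2) with 0 in Hr by ring.
    rewrite sqrt_0 in Hr. lra.
  + rewrite mapply_barpi, Hc. unfold barpi; cbn [fst snd]. f_equal; ring.
- intros [l [_ Hl]]. unfold cross_act. rewrite Hl. unfold barpi; cbn [fst snd]. ring.
Qed.

Lemma lift_cross_act A c y : det A = 1 -> lifts A c ->
  cross_act A y = vnorm (mapply A (barpi y)) * sin (c y - y).
Proof.
intros Hd Hl. pose proof (vnorm_act_pos A y Hd).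
rewrite (proj1 (lift_sin_cos A c y Hl)). field. lra.
Qed.

Lemma lift_sin_eq_0_iff A F a : det A = 1 -> lifts A F ->
  (sin (F a - a) = 0 <-> cross_act A a = 0).
Proof.
intros Hd Hl. pose proof (vnorm_act_pos A a Hd) as Hr.
rewrite (lift_cross_act A F a Hd Hl). split; intro H.
- rewrite H. ring.
- destruct (Rmult_integral _ _ H); [lra | assumption].
Qed.

Lemma fixed_by_proj_iff_sin F a : tildeSL F -> (fixed_by_proj F a <-> sin (F a - a) = 0).
Proof.
intros [_ [A [Hd Hl]]]. split.
- intros [B [HdB [HlB Hp]]].
  apply (lift_sin_eq_0_iff B F a HdB HlB), (cross_act_eq_0_iff_proj_eq B a HdB), Hp.
- intro Hs. exists A. split; [exact Hd | split; [exact Hl|]].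
  apply (cross_act_eq_0_iff_proj_eq A a Hd), (lift_sin_eq_0_iff A F a Hd Hl), Hs.
Qed.

Lemma W_integer_iff_fixed F a : tildeSL F -> a < F a ->
  (is_integer (W a (F a)) <-> fixed_by_proj F a).
Proof.
intros HF Ha. rewrite W_integer_iff_sin by exact Ha. symmetry. apply fixed_by_proj_iff_sin, HF.
Qed.

Lemma lift_displacement_sign A c y : det A = 1 -> lifts A c -> - PI < c y - y < PI ->
  (cross_act A y = 0 -> c y = y) /\
  (cross_act A y < 0 -> - PI < c y - y < 0) /\
  (0 < cross_act A y -> 0 < c y - y < PI).
Proof.
intros Hd Hl Hy. pose proof (vnorm_act_pos A y Hd) as Hr.
rewrite (lift_cross_act A c y Hd Hl).
destruct (Rtotal_order (c y - y) 0) as [Hlt|[Heq|Hgt]].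
- pose proof (sin_lt_0_var _ (proj1 Hy) Hlt). repeat split; intros; nra.
- rewrite Heq, sin_0. repeat split; intros; lra.
- pose proof (sin_gt_0 _ Hgt (proj2 Hy)). repeat split; intros; nra.
Qed.

(** * Canonical lifts *)

Lemma is_canonical_lift_angle_lift A : det A = 1 -> positive_definite A -> m21 A = 0 ->
  is_canonical_lift A (angle_lift A).
Proof.
intros Hd HA H21. pose proof (lifts_angle_lift A HA) as Hl. split.
- split; [split; [apply diffeo_angle_lift; assumption | exists A; split; assumption] | left; exact Hl].
- exists 0. unfold angle_lift, cross_act, mapply, barpi; cbn [fst snd].
  rewrite H21, sin_0, cos_0.
  replace (1 * (0 * 1 + m22 A * 0) - 0 * (m11 A * 1 + m12 A * 0)) with 0 by ring.
  unfold Rdiv. rewrite Rmult_0_l, atan_0. ring.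
Qed.

Lemma canonical_lift_spec A : det A = 1 -> positive_definite A -> m21 A = 0 ->
  is_canonical_lift A (canonical_lift A).
Proof.
intros Hd HA H21. unfold canonical_lift. apply epsilon_spec.
exists (angle_lift A). apply is_canonical_lift_angle_lift; assumption.
Qed.

(* A lift of [mopp A] fixing x0 would force <v, -A v> > 0 for v = barpi x0. *)
Lemma is_canonical_lift_lifts A c : det A = 1 -> positive_definite A ->
  is_canonical_lift A c -> lifts A c.
Proof.
intros Hd HA [[_ [Hl|Hl]] [x0 Hx0]]; [exact Hl | exfalso].
assert (Hd' : det (mopp A) = 1) by (unfold det, mopp in *; cbn; lra).
pose proof (vnorm_act_pos (mopp A) x0 Hd') as Hr.
destruct (lift_sin_cos (mopp A) c x0 Hl) as [_ Ec].
rewrite Hx0, Rminus_diag, cos_0 in Ec.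
assert (Edot : dot_act (mopp A) x0 = - dot_act A x0)
  by (unfold dot_act, mapply, mopp; cbn; ring).
pose proof (HA x0) as Hpos. rewrite Edot in Ec.
apply (Rmult_eq_compat_r (vnorm (mapply (mopp A) (barpi x0)))) in Ec.
unfold Rdiv in Ec. rewrite Rmult_assoc, Rinv_l, Rmult_1_l, Rmult_1_r in Ec by lra. lra.
Qed.

Lemma tildeSL_fixed_displacement c x0 y : tildeSL c -> c x0 = x0 -> - PI < c y - y < PI.
Proof.
intros Hc Hx0. pose proof PI_RGT_0.
pose proof (archimed ((y - x0) / PI)) as [Hup Hup'].
set (m := (up ((y - x0) / PI) - 1)%Z).
set (z := x0 + IZR m * PI).
assert (Hz : c z = z) by (unfold z; rewrite tildeSL_add_Z_PI, Hx0 by exact Hc; reflexivity).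
assert (Ey : y - x0 = (y - x0) / PI * PI) by (field; lra).
assert (Hzy : z <= y < z + PI).
{ unfold z, m. rewrite minus_IZR. change (IZR 1) with 1. split; nra. }
destruct (Req_dec y z) as [Eyz|Hyz].
- rewrite Eyz, Hz. lra.
- pose proof (tildeSL_half_turn c z y Hc ltac:(lra)). rewrite Hz in *. lra.
Qed.

Lemma W_conj_canonical_lift A (n : nat) F g x :
  det A = 1 -> positive_definite A -> m21 A = 0 -> (1 <= n)%nat -> tildeSL g ->
  (forall x, F (g x) = g (canonical_lift A (tE (INR n * PI) x))) ->
  g x < F (g x) /\
  (cross_act A x = 0 -> W (g x) (F (g x)) = INR n) /\
  (cross_act A x < 0 -> W (g x) (F (g x)) = INR n - / 2) /\
  (0 < cross_act A x -> W (g x) (F (g x)) = INR n + / 2).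
Proof.
intros Hd HA H21 Hn Hg Hconj.
pose proof (canonical_lift_spec A Hd HA H21) as Hcan.
pose proof (is_canonical_lift_lifts A _ Hd HA Hcan) as Hl.
destruct Hcan as [[Hc _] [x0 Hx0]].
set (c := canonical_lift A) in *.
pose proof (tildeSL_fixed_displacement c x0 x Hc Hx0) as Hdisp.
destruct (lift_displacement_sign A c x Hd Hl Hdisp) as [H0 [Hneg Hpos]].
assert (HnR : 1 <= INR n) by exact (le_INR 1 n Hn).
assert (Hx : x < c x + INR n * PI) by (pose proof PI_RGT_0; nra).
rewrite Hconj. unfold tE. rewrite tildeSL_add_nat_PI, W_tildeSL by assumption.
split; [apply tildeSL_increasing; assumption|].
repeat split; intro Hs.
- apply W_eq_nat. rewrite (H0 Hs). ring.
- replace (INR n - / 2) with (INR (n - 1) + / 2) by (rewrite minus_INR by exact Hn; simpl; lra).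
  apply W_eq_half. rewrite minus_INR by exact Hn. specialize (Hneg Hs). simpl. lra.
- apply W_eq_half. specialize (Hpos Hs). lra.
Qed.

(** * The model elements *)

(* ZArith's deprecated notations [Pplus] and [Pminus] shadow the matrices of Defs. *)
Lemma det_Pplus : det Defs.Pplus = 1.
Proof. unfold det, Defs.Pplus; cbn. ring. Qed.

Lemma det_Pminus : det Defs.Pminus = 1.
Proof. unfold det, Defs.Pminus; cbn. ring. Qed.

Lemma det_Hmat lam : 0 < lam -> det (Hmat lam) = 1.
Proof. intro. unfold det, Hmat; cbn. field. lra. Qed.

Lemma positive_definite_Pplus : positive_definite Defs.Pplus.
Proof.
intro t. unfold dot_act, mapply, barpi, Defs.Pplus; cbn. pose proof (sin2_cos2_pow t). nra.
Qed.

Lemma positive_definite_Pminus : positive_definite Defs.Pminus.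
Proof.
intro t. unfold dot_act, mapply, barpi, Defs.Pminus; cbn. pose proof (sin2_cos2_pow t). nra.
Qed.

Lemma positive_definite_Hmat lam : 0 < lam -> positive_definite (Hmat lam).
Proof.
intros Hl t. unfold dot_act, mapply, barpi, Hmat; cbn. pose proof (sin2_cos2_pow t).
assert (0 < / lam) by (apply Rinv_0_lt_compat; lra).
assert (0 < lam * cos t ^ 2 + / lam * sin t ^ 2).
{ destruct (Req_dec (cos t) 0) as [E|E]; [rewrite E in *; nra|].
  assert (0 < cos t ^ 2) by (apply pow2_gt_0, E). nra. }
nra.
Qed.

Lemma cross_act_Pplus t : cross_act Defs.Pplus t = - sin t ^ 2.
Proof. unfold cross_act, mapply, barpi, Defs.Pplus; cbn. ring. Qed.

Lemma cross_act_Pminus t : cross_act Defs.Pminus t = sin t ^ 2.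
Proof. unfold cross_act, mapply, barpi, Defs.Pminus; cbn. ring. Qed.

Lemma cross_act_Hmat lam t : cross_act (Hmat lam) t = (/ lam - lam) * sin t * cos t.
Proof. unfold cross_act, mapply, barpi, Hmat; cbn. ring. Qed.

Lemma W_conj_tE F alpha : 0 < alpha -> conjugate F (tE alpha) ->
  forall (a : R) (n : nat),
    (W a (F a) = INR n <-> alpha = INR n * PI) /\
    (INR n * PI < alpha < (INR n + 1) * PI -> W a (F a) = INR n + / 2).
Proof.
intros Ha [g [Hg Hconj]] a n. destruct (tildeSL_surjective g a Hg) as [x <-].
rewrite Hconj. unfold tE. rewrite W_tildeSL by (assumption || lra).
split; [split|].
- intro HW. destruct (PI_floor_pos alpha Ha) as [k [E|E]].
  + rewrite (W_eq_nat x (x + alpha) k) in HW by lra. apply INR_eq in HW. subst k. exact E.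
  + rewrite (W_eq_half x (x + alpha) k) in HW by lra. exfalso.
    apply (INR_plus_half_not_integer k). rewrite HW. exists (Z.of_nat n). apply INR_IZR_INZ.
- intro E. apply W_eq_nat. lra.
- intro E. apply W_eq_half. lra.
Qed.

Lemma W_conj_tPplus F (n : nat) : tildeSL F -> (1 <= n)%nat -> conjugate F (tPplus n) ->
  (forall a : R,
     INR n - / 2 <= W a (F a) <= INR n /\
     (is_integer (W a (F a)) <-> fixed_by_proj F a)) /\
  (exists a : R, W a (F a) = INR n - / 2) /\
  (exists a : R, W a (F a) = INR n).
Proof.
intros HF Hn [g [Hg Hconj]].
pose proof (W_conj_canonical_lift Defs.Pplus n F g) as HW.
specialize (fun x => HW x det_Pplus positive_definite_Pplus eq_refl Hn Hg Hconj).
split; [|split].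
- intro a. destruct (tildeSL_surjective g a Hg) as [x <-].
  destruct (HW x) as [Hlt [H0 [Hneg _]]].
  split; [|exact (W_integer_iff_fixed F (g x) HF Hlt)].
  pose proof (cross_act_Pplus x).
  destruct (Rtotal_order (cross_act Defs.Pplus x) 0) as [C|[C|C]];
    [rewrite (Hneg C) | rewrite (H0 C) | nra]; lra.
- destruct (HW (PI / 2)) as [_ [_ [Hneg _]]]. exists (g (PI / 2)).
  apply Hneg. rewrite cross_act_Pplus, sin_PI2. lra.
- destruct (HW 0) as [_ [H0 _]]. exists (g 0).
  apply H0. rewrite cross_act_Pplus, sin_0. ring.
Qed.

Lemma W_conj_tPminus F (n : nat) : tildeSL F -> (1 <= n)%nat -> conjugate F (tPminus n) ->
  (forall a : R,
     INR n <= W a (F a) <= INR n + / 2 /\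
     (is_integer (W a (F a)) <-> fixed_by_proj F a)) /\
  (exists a : R, W a (F a) = INR n) /\
  (exists a : R, W a (F a) = INR n + / 2).
Proof.
intros HF Hn [g [Hg Hconj]].
pose proof (W_conj_canonical_lift Defs.Pminus n F g) as HW.
specialize (fun x => HW x det_Pminus positive_definite_Pminus eq_refl Hn Hg Hconj).
split; [|split].
- intro a. destruct (tildeSL_surjective g a Hg) as [x <-].
  destruct (HW x) as [Hlt [H0 [_ Hpos]]].
  split; [|exact (W_integer_iff_fixed F (g x) HF Hlt)].
  pose proof (cross_act_Pminus x).
  destruct (Rtotal_order (cross_act Defs.Pminus x) 0) as [C|[C|C]];
    [nra | rewrite (H0 C) | rewrite (Hpos C)]; lra.
- destruct (HW 0) as [_ [H0 _]]. exists (g 0).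
  apply H0. rewrite cross_act_Pminus, sin_0. ring.
- destruct (HW (PI / 2)) as [_ [_ [_ Hpos]]]. exists (g (PI / 2)).
  apply Hpos. rewrite cross_act_Pminus, sin_PI2. lra.
Qed.

Lemma W_conj_tH F lam (n : nat) : tildeSL F -> 1 < lam -> (1 <= n)%nat ->
  conjugate F (tH lam n) ->
  (forall a : R,
     INR n - / 2 <= W a (F a) <= INR n + / 2 /\
     (is_integer (W a (F a)) <-> fixed_by_proj F a)) /\
  (exists a : R, W a (F a) = INR n - / 2) /\
  (exists a : R, W a (F a) = INR n + / 2).
Proof.
intros HF Hlam Hn [g [Hg Hconj]].
pose proof (W_conj_canonical_lift (Hmat lam) n F g) as HW.
specialize (fun x => HW x (det_Hmat lam ltac:(lra)) (positive_definite_Hmat lam ltac:(lra))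
                       eq_refl Hn Hg Hconj).
assert (Hinv : / lam - lam < 0).
{ assert (/ lam < 1) by (rewrite <- Rinv_1; apply Rinv_lt_contravar; lra). lra. }
assert (0 < sin (PI / 4) /\ 0 < cos (PI / 4)) as [Hs Hc].
{ pose proof PI_RGT_0. split; [apply sin_gt_0 | apply cos_gt_0]; lra. }
split; [|split].
- intro a. destruct (tildeSL_surjective g a Hg) as [x <-].
  destruct (HW x) as [Hlt [H0 [Hneg Hpos]]].
  split; [|exact (W_integer_iff_fixed F (g x) HF Hlt)].
  destruct (Rtotal_order (cross_act (Hmat lam) x) 0) as [C|[C|C]];
    [rewrite (Hneg C) | rewrite (H0 C) | rewrite (Hpos C)]; lra.
- destruct (HW (PI / 4)) as [_ [_ [Hneg _]]]. exists (g (PI / 4)).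
  apply Hneg. rewrite cross_act_Hmat.
  assert (0 < sin (PI / 4) * cos (PI / 4)) by nra. nra.
- destruct (HW (- (PI / 4))) as [_ [_ [_ Hpos]]]. exists (g (- (PI / 4))).
  apply Hpos. rewrite cross_act_Hmat, sin_neg, cos_neg.
  assert (0 < sin (PI / 4) * cos (PI / 4)) by nra. nra.
Qed.

Theorem mainTheorem13 (F : R -> R) (HF : tildeSL F) :
  (* (1) elliptic case *)
  (forall alpha : R, 0 < alpha -> conjugate F (tE alpha) ->
     forall (a : R) (n : nat),
       (W a (F a) = INR n <-> alpha = INR n * PI) /\
       (INR n * PI < alpha < (INR n + 1) * PI -> W a (F a) = INR n + / 2)) /\
  (* (2) parabolic case, P^+ *)
  (forall n : nat, (1 <= n)%nat -> conjugate F (tPplus n) ->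
     (forall a : R,
        INR n - / 2 <= W a (F a) <= INR n /\
        (is_integer (W a (F a)) <-> fixed_by_proj F a)) /\
     (exists a : R, W a (F a) = INR n - / 2) /\
     (exists a : R, W a (F a) = INR n)) /\
  (* (2) parabolic case, P^- *)
  (forall n : nat, (1 <= n)%nat -> conjugate F (tPminus n) ->
     (forall a : R,
        INR n <= W a (F a) <= INR n + / 2 /\
        (is_integer (W a (F a)) <-> fixed_by_proj F a)) /\
     (exists a : R, W a (F a) = INR n) /\
     (exists a : R, W a (F a) = INR n + / 2)) /\
  (* (3) hyperbolic case *)
  (forall (lam : R) (n : nat), 1 < lam -> (1 <= n)%nat -> conjugate F (tH lam n) ->
     (forall a : R,
        INR n - / 2 <= W a (F a) <= INR n + / 2 /\
        (is_integer (W a (F a)) <-> fixed_by_proj F a)) /\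
     (exists a : R, W a (F a) = INR n - / 2) /\
     (exists a : R, W a (F a) = INR n + / 2)).
Proof.
split; [|split; [|split]].
- intros alpha Ha Hconj. exact (W_conj_tE F alpha Ha Hconj).
- intros n Hn Hconj. exact (W_conj_tPplus F n HF Hn Hconj).
- intros n Hn Hconj. exact (W_conj_tPminus F n HF Hn Hconj).
- intros lam n Hlam Hn Hconj. exact (W_conj_tH F lam n HF Hlam Hn Hconj).
Qed.
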